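(* Let $\mathsf{G}=(N,E,w)$ be a strongly connected weighted directed graph on $N=\{1,\dots,n\}$ with Laplacian $\mathbf{L}$, and consider the linear consensus system $\dot{\bm{x}}(t)=-\mathbf{L}\bm{x}(t)$, $\bm{x}(t)\in\mathbb{R}^n$. Let $\bm{q}$ be its left Perron vector. Let $H:\mathbb{R}\to\mathbb{R}$ be a continuous function and let $\beta>0$, $c>0$. Then the additive function $$V(\bm{x})=\beta\sum_{i=1}^n q_i\,H(c\,x_i)$$ is a strict Lyapunov function for the consensus system if and only if $H$ is strictly convex.
   Context: A weighted directed graph $\mathsf{G}=(N,E,w)$ has node set $N=\{1,\dots,n\}$, edge set $E\subseteq N\times N$ of ordered pairs, and positive weights $w_{ij}>0$ for $(i,j)\in E$. Its Laplacian $\mathbf{L}=[l_{ij}]$ is defined by $l_{ij}=-w_{ij}$ if $(i,j)\in E$ ($i\neq j$), $l_{ij}=0$ if $i\ne j$ and $(i,j)\notin E$, and $l_{ii}=\sum_{j:(i,j)\in E}w_{ij}$; thus $\dot x_i=\sum_{j:(i,j)\in E}w_{ij}(x_j-x_i)$. The graph (and the consensus system) is called strongly connected/irreducible if $\mathrm{rank}(\mathbf{L})=n-1$. The flow $\mathbf{P}^{(t)}=e^{-\mathbf{L}t}$, $t\ge 0$, is a row-stochastic matrix. The left Perron vector $\bm{q}\in\mathbb{R}^n$ is the vector with $\bm{q}^\top\mathbf{L}=\bm{0}^\top$, $q_i>0$ for all $i$, and $\sum_i q_i=1$. The equilibria of the system are the consensus vectors $a\bm{1}$, $a\in\mathbb{R}$.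 A strict Lyapunov function is a function $V$ such that along every trajectory with $\bm{x}(0)$ not an equilibrium, $V(\bm{x}(t))<V(\bm{x}(0))$ for every $0<t<\infty$. *)

From HB Require Import structures.
From mathcomp Require Import all_boot all_order all_algebra.
From mathcomp Require Import all_classical all_reals all_analysis.
Set Implicit Arguments. Unset Strict Implicit. Unset Printing Implicit Defensive.
Import Order.TTheory GRing.Theory Num.Theory numFieldNormedType.Exports.
Local Open Scope ring_scope.
Local Open Scope classical_set_scope.

Section Defs.
Variable R : realType.

Definition laplacian (n : nat) (E : rel 'I_n) (w : 'I_n -> 'I_n -> R)
  : 'M[R]_n :=
  \matrix_(i, j) (if i == j then \sum_(k | E i k && (k != i)) w i k
                  else if E i j then - w i j else 0).

Definition left_perron (n : nat) (L : 'M[R]_n) (q : 'I_n -> R) : Prop :=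
  (\row_i q i) *m L = 0 /\ (forall i, 0 < q i) /\ \sum_i q i = 1.

Definition is_trajectory (n : nat) (L : 'M[R]_n) (x : R -> 'I_n -> R) : Prop :=
  (forall i, {within [set t : R | 0 <= t], continuous (fun t => x t i)}) /\
  (forall i t, 0 < t ->
     derivable (fun s => x s i) t 1 /\
     (fun s => x s i)^`() t = - \sum_j L i j * x t j).

Definition consensus (n : nat) (v : 'I_n -> R) : Prop :=
  exists a : R, forall i, v i = a.

Definition strict_lyapunov (n : nat) (L : 'M[R]_n) (V : ('I_n -> R) -> R)
  : Prop :=
  forall x : R -> 'I_n -> R, is_trajectory L x -> ~ consensus (x 0) ->
    forall t, 0 < t -> V (x t) < V (x 0).

Definition strictly_convex (H : R -> R) : Prop :=
  forall x y : R, x != y -> forall l : R, 0 < l < 1 ->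
    H (l * x + (1 - l) * y) < l * H x + (1 - l) * H y.

End Defs.

(* If [H] is strictly convex: a forward Euler step of length [h] replaces each
   coordinate by a convex combination of itself and its neighbours, so by
   Jensen the q-weighted sum of [H] does not grow, the transport terms
   cancelling because [q^T L = 0]; strict convexity makes it drop by [h] times
   the midpoint gaps across edges, which are positive away from consensus.
   Since [H] is merely continuous, the resulting bound on the right Dini
   derivative of [V] along a trajectory is integrated by real induction.
   Conversely, a continuous [H] that is not strictly convex lies above some
   line on an interval [[a, b]] and meets it at [a] and [b]. The trajectory
   issued from a vector with entries [a / c] and [b / c], built by uniformizing
   [L] into the series [exp (- d t) * sum_k (d t)^k / k! * P^k x0], keeps its
   entries in [[a / c, b / c]] and its q-mean, so [V] never falls below its
   initial value. *)
From HB Require Import structures.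
From mathcomp Require Import all_boot all_order all_algebra.
From mathcomp Require Import all_classical all_reals all_analysis.
From mathcomp Require Import ring lra.
Import Order.TTheory GRing.Theory Num.Theory numFieldNormedType.Exports.
Local Open Scope ring_scope.
Local Open Scope classical_set_scope.
Set Implicit Arguments. Unset Strict Implicit.

Section Convexity.
Variable R : realType.
Implicit Types (H : R -> R) (a b l : R).

Definition convex_fun H := forall a b l, 0 <= l <= 1 ->
  H (l * a + (1 - l) * b) <= l * H a + (1 - l) * H b.

Lemma strictly_convex_convex H : strictly_convex H -> convex_fun H.
Proof.
move=> sc a b l /andP[l0 l1].
have [->|ab] := eqVneq a b; first by rewrite -!mulrDl subrKC !mul1r.
have [->|ln0] := eqVneq l 0; first by rewrite !mul0r !add0r subr0 !mul1r.
have [->|ln1] := eqVneq l 1; first by rewrite subrr !mul0r !addr0 !mul1r.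
by apply/ltW/sc; rewrite // lt0r ln0 l0 lt_neqAle ln1 l1.
Qed.

Definition midpoint_gap H a b := (H a + H b) / 2 - H ((a + b) / 2).

Lemma midpoint_gapE H a b : midpoint_gap H a b =
  (2^-1 * H a + (1 - 2^-1) * H b) - H (2^-1 * a + (1 - 2^-1) * b).
Proof. by rewrite /midpoint_gap; congr (_ - H _); field. Qed.

Lemma midpoint_gap_ge0 H a b : convex_fun H -> 0 <= midpoint_gap H a b.
Proof. by move=> cv; rewrite midpoint_gapE subr_ge0 cv // invr_ge0 invf_le1; lra. Qed.

Lemma midpoint_gap_gt0 H a b : strictly_convex H -> a != b ->
  0 < midpoint_gap H a b.
Proof. by move=> sc ab; rewrite midpoint_gapE subr_gt0 sc // invr_gt0 invf_lt1; lra. Qed.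

(* Convexity between [a] and the midpoint of [a, b]. *)
Lemma convex_le_sub_gap H a b l : convex_fun H -> 0 <= l <= 2^-1 ->
  H ((1 - l) * a + l * b) <=
  (1 - l) * H a + l * H b - 2 * l * midpoint_gap H a b.
Proof.
move=> cv /andP[l0 l1].
have -> : (1 - l) * a + l * b
    = (1 - 2 * l) * a + (1 - (1 - 2 * l)) * ((a + b) / 2) by field.
have -> : (1 - l) * H a + l * H b - 2 * l * midpoint_gap H a b
    = (1 - 2 * l) * H a + (1 - (1 - 2 * l)) * H ((a + b) / 2).
  by rewrite /midpoint_gap; field.
by apply: cv; apply/andP; split; lra.
Qed.

Lemma psumr_eq0_mulr (I : Type) (r : seq I) (P : pred I) (p f : I -> R) :
  (forall i, P i -> 0 <= p i) -> \sum_(i <- r | P i) p i = 0 ->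
  \sum_(i <- r | P i) p i * f i = 0.
Proof.
elim: r => [|j r IH] p0; first by rewrite !big_nil.
rewrite !big_cons; case: ifP => Pj; last exact: IH.
move=> /eqP; rewrite paddr_eq0 ?p0 ?sumr_ge0 //.
by move=> /andP[/eqP -> /eqP /IH ->]; rewrite ?mul0r ?addr0.
Qed.

Lemma convex_jensen_mass H (I : Type) (r : seq I) (P : pred I) (p z : I -> R) :
  convex_fun H -> (forall i, P i -> 0 <= p i) ->
  0 < \sum_(i <- r | P i) p i ->
  (\sum_(i <- r | P i) p i) *
    H ((\sum_(i <- r | P i) p i * z i) / \sum_(i <- r | P i) p i)
  <= \sum_(i <- r | P i) p i * H (z i).
Proof.
move=> cv p0; elim: r => [|j r IH]; first by rewrite big_nil ltxx.
rewrite !big_cons; case: ifP => Pj; last exact: IH.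
set S := \sum_(i <- r | P i) p i; set Z := \sum_(i <- r | P i) p i * z i.
have S0 : 0 <= S by apply: sumr_ge0.
have pj0 := p0 _ Pj; move=> Spos.
have [S_eq0|S_neq0] := eqVneq S 0.
  rewrite /Z !(psumr_eq0_mulr _ p0 S_eq0) S_eq0 !addr0 in Spos *.
  by rewrite [p j * z j]mulrC mulfK // gt_eqF.
have Sp : 0 < S by rewrite lt0r S_neq0.
have l01 : 0 <= p j / (p j + S) <= 1.
  by rewrite divr_ge0 ?ler_pdivrMr /=; lra.
have := cv (z j) (Z / S) _ l01.
have -> : p j / (p j + S) * z j + (1 - p j / (p j + S)) * (Z / S)
    = (p j * z j + Z) / (p j + S).
  by field; apply/andP; split; rewrite ?S_neq0 //; lra.
rewrite -(ler_pM2l Spos) => /le_trans; apply.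
have -> : (p j + S) * (p j / (p j + S) * H (z j) + (1 - p j / (p j + S)) * H (Z / S))
    = p j * H (z j) + S * H (Z / S) by field; lra.
by rewrite lerD2l IH.
Qed.

Lemma convex_jensen H (I : Type) (r : seq I) (P : pred I) (p z : I -> R) :
  convex_fun H -> (forall i, P i -> 0 <= p i) ->
  \sum_(i <- r | P i) p i = 1 ->
  H (\sum_(i <- r | P i) p i * z i) <= \sum_(i <- r | P i) p i * H (z i).
Proof.
move=> cv p0 p1; have := @convex_jensen_mass H I r P p z cv p0.
by rewrite p1 ltr01 divr1 mul1r; apply.
Qed.

End Convexity.

Section RealAnalysis.
Variable R : realType.

Lemma continuous_at_dist_lt (f : R -> R) u : {for u, continuous f} ->
  forall e, 0 < e -> exists2 d, 0 < d & forall v, `|v - u| < d -> `|f v - f u| < e.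
Proof.
move=> /cvgrPdist_lt cf e /cf /nbhs_ballP [d d0 Hd]; exists d => // v Hv.
by rewrite distrC; apply: Hd; rewrite /ball /= distrC.
Qed.

Lemma continuous_within_ge0_dist_lt (f : R -> R) :
  {within [set t : R | 0 <= t], continuous f} ->
  forall u, 0 <= u -> forall e, 0 < e -> exists2 d, 0 < d &
    forall v, 0 <= v -> `|v - u| < d -> `|f v - f u| < e.
Proof.
move=> cf u u0 e e0.
move/cvgrPdist_lt: ((subspace_continuousP _ f).1 cf u u0) => /(_ e e0).
rewrite near_withinE => /nbhs_ballP [d d0 hd].
by exists d => // v v0 hv; rewrite distrC; apply: hd; rewrite // /ball /= distrC.
Qed.

Lemma near_right_interval (P : R -> Prop) : (\forall h \near 0^'+, P h) ->
  exists2 d : R, 0 < d & forall h, 0 < h < d -> P h.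
Proof.
rewrite near_withinE => /nbhs_ballP [d d0 hd]; exists d => // h /andP[h0 hd'].
by apply: hd; rewrite // /ball /= sub0r normrN gtr0_norm.
Qed.

Lemma near_right_mul_lt (a b : R) : 0 < b -> \forall h \near 0^'+, h * a < b.
Proof.
move=> b0; near=> h.
have h0 : 0 < h by near: h; exact: nbhs_right_gt.
have : h < b / (`|a| + 1) by near: h; apply: nbhs_right_lt; rewrite divr_gt0 // ltr_pwDr.
rewrite ltr_pdivlMr ?ltr_pwDr // => hb.
apply: le_lt_trans hb; rewrite ler_wpM2l ?ltW //.
by have := ler_norm a; lra.
Unshelve. all: by end_near.
Qed.

Lemma derive1_right_approx (f : R -> R) t D : derivable f t 1 -> f^`() t = D ->
  forall e, 0 < e -> \forall h \near 0^'+, `|f (t + h) - f t - h * D| <= e * h.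
Proof.
move=> df fD e e0.
have : h^-1 *: (f (h *: 1 + t) - f t) @[h --> 0^'] --> 'D_1 f t := df.
rewrite -derive1E fD => /cvgrPdist_le /(_ e e0); rewrite !near_withinE.
apply: filterS => h hP h0; have := hP (lt0r_neq0 h0).
rewrite [h%:A]mulr1 [h + t]addrC.
have -> : f (t + h) - f t - h * D = - h * (D - h^-1 *: (f (t + h) - f t)).
  by rewrite /GRing.scale /=; field; rewrite gt_eqF.
by rewrite normrM normrN (gtr0_norm h0) mulrC ler_pM2r.
Qed.

Lemma real_induction (P : R -> Prop) (s t : R) : s <= t -> P s ->
  (forall u, s <= u <= t ->
    (forall e : R, 0 < e -> exists2 v, s <= v <= u & u - e < v /\ P v) -> P u) ->
  (forall u, s <= u < t -> P u ->
    exists2 d : R, 0 < d & forall h, 0 < h < d -> P (u + h)) ->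
  P t.
Proof.
move=> st Ps closed step.
pose A := [set u | s <= u <= t /\ P u].
have ubA : ubound A t by move=> x [/andP[_ ->]].
have hA : has_sup A by split; [exists s; rewrite /A /= lexx st | exists t].
have As := sup_upper_bound hA.
have su : s <= sup A by apply: As; rewrite /A /= lexx st.
have ut : sup A <= t by apply: ge_sup => //; exists s; rewrite /A /= lexx st.
have PA : P (sup A).
  apply: closed; first by rewrite su ut.
  move=> e e0; have [v Av ev] := sup_adherent e0 hA.
  by case: (Av) => /andP[sv _] Pv; exists v; rewrite ?sv ?(As _ Av).
have [<-//|ltut] := eqVneq (sup A) t.
have {ltut} ltut : sup A < t by rewrite lt_neqAle ltut.
have [d d0 Pd] := step (sup A) ltac:(by rewrite su ltut) PA.
pose h := Num.min (d / 2) (t - sup A).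
have h0 : 0 < h by rewrite lt_min; apply/andP; split; lra.
have hd : h < d by rewrite gt_min; apply/orP; left; lra.
have ht : h <= t - sup A by rewrite ge_min lexx orbT.
have : A (sup A + h) by split; [apply/andP; split; lra | apply: Pd; rewrite h0].
by move/As; lra.
Qed.

Lemma nonincreasing_right_dini (W : R -> R) (s t : R) : s <= t ->
  (forall u, s <= u <= t -> forall e : R, 0 < e -> exists2 d : R, 0 < d &
    forall v, s <= v <= t -> `|v - u| < d -> `|W v - W u| < e) ->
  (forall u, s <= u < t -> forall e : R, 0 < e -> exists2 d : R, 0 < d &
    forall h, 0 < h < d -> W (u + h) <= W u + e * h) ->
  W t <= W s.
Proof.
move=> st cW dW.
have slope (e : R) : 0 < e -> W t <= W s + e * (t - s).
  move=> e0; apply: (@real_induction (fun u => W u <= W s + e * (u - s)) s t) => //.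
  - by rewrite /= subrr mulr0 addr0.
  - move=> u /andP[su ut] closeP; rewrite /= leNgt; apply/negP => gap.
    have [d d0 hd] := cW u ltac:(by rewrite su ut) _ (ltac:(lra) :
      0 < W u - (W s + e * (u - s))).
    have [v /andP[sv vu] [uv Pv]] := closeP d d0.
    have := hd v ltac:(apply/andP; split; lra) ltac:(rewrite ler0_norm; lra).
    rewrite ltr_norml => /andP[+ _].
    have : e * (v - s) <= e * (u - s) by rewrite ler_pM2l //; lra.
    lra.
  - move=> u /andP[su ut] /= Pu; have [d d0 hd] := dW u ltac:(by rewrite su ut) e e0.
    exists d => // h /hd /=.
    have -> : e * (u + h - s) = e * (u - s) + e * h by ring.
    lra.
have [<-//|neq] := eqVneq s t.
have ts : 0 < t - s by rewrite subr_gt0 lt_neqAle neq st.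
apply/ler_addgt0Pr => e e0.
by have := slope _ (divr_gt0 e0 ts); rewrite mulfVK // gt_eqF.
Qed.

Lemma within_ge0_eq_at0 (f g : R -> R) (t : R) :
  {within [set t : R | 0 <= t], continuous f} ->
  {within [set t : R | 0 <= t], continuous g} ->
  0 < t -> (forall s, 0 < s < t -> f s = g s) -> f 0 = g 0.
Proof.
move=> cf cg t0 fg; apply/eqP; rewrite -subr_eq0 -normr_le0 leNgt; apply/negP => N0.
have [d1 d10 hd1] := continuous_within_ge0_dist_lt cf (lexx 0) (ltac:(lra) :
  0 < `|f 0 - g 0| / 2).
have [d2 d20 hd2] := continuous_within_ge0_dist_lt cg (lexx 0) (ltac:(lra) :
  0 < `|f 0 - g 0| / 2).
pose s := Num.min (Num.min d1 d2) t / 2.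
have m0 : 0 < Num.min (Num.min d1 d2) t by rewrite !lt_min d10 d20 t0.
have m1 : Num.min (Num.min d1 d2) t <= d1 by rewrite !ge_min lexx.
have m2 : Num.min (Num.min d1 d2) t <= d2 by rewrite !ge_min lexx orbT.
have m3 : Num.min (Num.min d1 d2) t <= t by rewrite ge_min lexx orbT.
have s_lt : 0 < s < t by apply/andP; split; rewrite /s; lra.
have s_abs : `|s - 0| < Num.min (Num.min d1 d2) t by rewrite subr0 gtr0_norm /s; lra.
have := hd1 s (ltW (proj1 (andP s_lt))) ltac:(lra).
have := hd2 s (ltW (proj1 (andP s_lt))) ltac:(lra).
rewrite (fg s s_lt) => h2 h1.
have := ler_normD (f 0 - g s) (g s - g 0).
rewrite -distrC in h1; rewrite addrA subrK; lra.
Qed.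

End RealAnalysis.

Section ConvexLocal.
Variable R : realType.
Implicit Types H : R -> R.

Lemma convex_fun_opp H : convex_fun H -> convex_fun (fun s => H (- s)).
Proof.
by move=> cv a b l hl; have := cv (- a) (- b) l hl; rewrite !mulrN -opprD.
Qed.

Lemma convex_increment_le H (p u v : R) : convex_fun H ->
  `|u - p| < 1 -> H p - 1 < H u -> u <= v <= u + 1 ->
  H v - H u <= Num.max 0 (H (p + 2) - H p + 1) * (v - u).
Proof.
move=> cv /[!ltr_norml] /andP[up1 up2] Hu /andP[uv vu].
set K := Num.max 0 _.
have K1 : H (p + 2) - H p + 1 <= K by rewrite le_max lexx orbT.
pose t := (v - u) / (p + 2 - u).
have t0 : 0 <= t by rewrite divr_ge0 //; lra.
have tvu : t <= v - u by rewrite ler_pdivrMr; nra.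
have := cv (p + 2) u t ltac:(rewrite t0 /=; lra).
have -> : t * (p + 2) + (1 - t) * u = v by rewrite /t; field; lra.
have : t * (H (p + 2) - H u) <= t * K by rewrite ler_wpM2l //; lra.
have : t * K <= (v - u) * K by rewrite ler_wpM2r // le_max lexx.
lra.
Qed.

Lemma convex_lipschitz_near H (p : R) : convex_fun H -> {for p, continuous H} ->
  exists2 d : R, 0 < d & exists2 K : R, 0 <= K &
    forall u v, `|u - p| < d -> `|v - u| <= 1 -> H v - H u <= K * `|v - u|.
Proof.
move=> cv cp.
have [d d0 hd] := continuous_at_dist_lt cp ltr01.
set K1 := Num.max 0 (H (p + 2) - H p + 1).
set K2 := Num.max 0 (H (- (- p + 2)) - H p + 1).
exists (Num.min d 1); first by rewrite lt_min d0 ltr01.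
exists (Num.max K1 K2); first by rewrite !le_max lexx.
move=> u v; rewrite lt_min => /andP[ud u1] vu1.
have Hu : H p - 1 < H u by have := hd u ud; rewrite ltr_norml; lra.
have [uv|vu] := lerP u v.
  rewrite ger0_norm ?subr_ge0 // in vu1 *.
  apply: le_trans (convex_increment_le cv u1 Hu _) _; first lra.
  by rewrite ler_wpM2r ?subr_ge0 // le_max lexx.
rewrite ltr0_norm ?subr_lt0 // in vu1 *.
have u1' : `|- u - - p| < 1 by rewrite -opprD normrN.
have Hu' : H (- - p) - 1 < H (- - u) by rewrite !opprK.
have vu' : - u <= - v <= - u + 1 by apply/andP; split; lra.
have := convex_increment_le (convex_fun_opp cv) u1' Hu' vu'.
rewrite /= !opprK -/K2.
have : K2 <= Num.max K1 K2 by rewrite le_max lexx orbT.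
have : 0 <= K2 by rewrite le_max lexx.
nra.
Qed.

Lemma convex_fun_scale H (c : R) : convex_fun H -> convex_fun (fun s => H (c * s)).
Proof.
move=> cv a b l hl /=.
have -> : c * (l * a + (1 - l) * b) = l * (c * a) + (1 - l) * (c * b) by ring.
exact: cv.
Qed.

Lemma continuous_scale H (c : R) : continuous H -> continuous (fun s => H (c * s)).
Proof.
by move=> cH s; apply: continuous_comp; [apply: cvgMl_tmp; exact: cvg_id | exact: cH].
Qed.

Lemma convex_derive_error H (f : R -> R) t D e : convex_fun H -> continuous H ->
  derivable f t 1 -> f^`() t = D -> 0 < e ->
  \forall h \near 0^'+, H (f (t + h)) - H (f t + h * D) <= e * h.
Proof.
move=> cv cH df fD e0.
have [d d0 [K K0 lipH]] := convex_lipschitz_near cv (@cH (f t)).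
have eK0 : 0 < e / (K + 1) by rewrite divr_gt0 //; lra.
near=> h.
have h0 : 0 < h by near: h; exact: nbhs_right_gt.
have near_ft : `|f t + h * D - f t| < d.
  rewrite addrAC subrr add0r normrM (gtr0_norm h0).
  by near: h; exact: near_right_mul_lt.
have step : `|f (t + h) - (f t + h * D)| <= e / (K + 1) * h.
  by rewrite opprD addrA; near: h; exact: derive1_right_approx.
have step1 : e / (K + 1) * h <= 1.
  by rewrite mulrC ltW //; near: h; exact: near_right_mul_lt.
apply: le_trans (lipH _ _ near_ft (le_trans step step1)) _.
apply: le_trans (ler_wpM2l K0 step) _.
have -> : K * (e / (K + 1) * h) = K / (K + 1) * (e * h) by field; lra.
by rewrite ger_pMl ?mulr_gt0 // ler_pdivrMr; lra.
Unshelve. all: by end_near.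
Qed.

End ConvexLocal.

Section TouchingLine.
Variable R : realType.
Implicit Types (g H : R -> R) (al ga : R).

Lemma last_root_before g (p r : R) : continuous g -> p < r -> g p <= 0 -> 0 < g r ->
  exists a, [/\ p <= a, a < r, g a = 0 & forall s, a <= s <= r -> 0 <= g s].
Proof.
move=> cg pr gp gr.
pose A := [set s | p <= s <= r /\ g s <= 0].
have Ap : A p by split; rewrite // lexx ltW.
have hA : has_sup A by split; [exists p | exists r => x [/andP[_ ->]]].
set a := sup A.
have As := sup_upper_bound hA; rewrite -/a in As.
have pa : p <= a by exact: As.
have ar : a <= r by apply: ge_sup => //; [exists p | move=> x [/andP[_ ->]]].
have pos s : a < s <= r -> 0 < g s.
  move=> /andP[hs sr]; rewrite ltNge; apply/negP => gs.
  have : A s by split => //; apply/andP; split; lra.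
  by move/As; lra.
have ga_le : g a <= 0.
  rewrite leNgt; apply/negP => ga.
  have [d d0 hd] := continuous_at_dist_lt (cg a) ga.
  have [v [/andP[pv vr] gv] hv] := sup_adherent d0 hA; rewrite -/a in hv.
  have va : v <= a by apply: As; split => //; apply/andP.
  have := hd v ltac:(rewrite ler0_norm; lra).
  by rewrite ltr_norml => /andP[h1 _]; lra.
have ar' : a < r by rewrite lt_neqAle ar andbT; apply/eqP => e; rewrite e in ga_le; lra.
have ga_ge : 0 <= g a.
  rewrite leNgt; apply/negP => ga.
  have [d d0 hd] := continuous_at_dist_lt (cg a) (ltac:(lra) : 0 < - g a).
  pose s := a + Num.min (d / 2) (r - a).
  have m0 : 0 < Num.min (d / 2) (r - a) by rewrite lt_min; apply/andP; split; lra.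
  have md : Num.min (d / 2) (r - a) < d by rewrite gt_min; apply/orP; left; lra.
  have mr : Num.min (d / 2) (r - a) <= r - a by rewrite ge_min lexx orbT.
  have := pos s ltac:(apply/andP; split; rewrite /s; lra).
  have := hd s ltac:(rewrite /s addrAC subrr add0r ger0_norm; lra).
  by rewrite ltr_norml => /andP[_ h2]; lra.
exists a; split => //; first lra.
move=> s /andP[hs sr]; have [<-|ne] := eqVneq a s; first lra.
by apply/ltW/pos; rewrite sr andbT lt_neqAle ne.
Qed.

Lemma nonneg_bump g (a0 m b0 : R) : continuous g -> a0 < m -> m < b0 ->
  g a0 <= 0 -> g b0 <= 0 -> 0 < g m ->
  exists a b, [/\ a < b, g a = 0, g b = 0 & forall s, a <= s <= b -> 0 <= g s].
Proof.
move=> cg am mb ga gb gm.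
have [a [ha1 ha2 ga0 ge_a]] := last_root_before cg am ga gm.
have cgN : continuous (fun s => g (- s)).
  by move=> s; apply: continuous_comp; [exact: opp_continuous | exact: cg].
have [b' [hb1 hb2 gb0 ge_b]] := @last_root_before (fun s => g (- s)) (- b0) (- m) cgN
  ltac:(lra) ltac:(by rewrite /= opprK) ltac:(by rewrite /= opprK).
exists a, (- b'); split => //; first lra.
move=> s /andP[s1 s2]; have [sm|ms] := lerP s m; first by apply: ge_a; rewrite s1 sm.
by have := ge_b (- s) ltac:(apply/andP; split; lra); rewrite opprK.
Qed.

Definition touching_line H (a b al ga : R) :=
  [/\ a < b, H a = al * a + ga, H b = al * b + ga &
      forall s, a <= s <= b -> al * s + ga <= H s].

Lemma bump_touching_line H al ga (a0 m b0 : R) : continuous H -> a0 < m -> m < b0 ->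
  H a0 = al * a0 + ga -> H b0 = al * b0 + ga -> al * m + ga < H m ->
  exists a b, touching_line H a b al ga.
Proof.
move=> cH am mb ha hb hm.
have cg : continuous (fun s => H s - (al * s + ga)).
  move=> s; apply: cvgB; first exact: cH.
  by apply: cvgD; [apply: cvgMl_tmp; exact: cvg_id | exact: cvg_cst].
have [a [b [ab ga0 gb0 ge0]]] := nonneg_bump cg am mb
  ltac:(by rewrite /= ha subrr) ltac:(by rewrite /= hb subrr) ltac:(by rewrite /= subr_gt0).
exists a, b; split => //; [move: ga0 | move: gb0 | move=> s /ge0]; lra.
Qed.

Lemma not_strictly_convex_witness H : ~ strictly_convex H ->
  exists a0 b0 l, [/\ a0 < b0, 0 < l < 1 &
    l * H a0 + (1 - l) * H b0 <= H (l * a0 + (1 - l) * b0)].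
Proof.
move=> nsc.
have [x [y [l [xy l01 hle]]]] : exists x y l, [/\ x != y, 0 < l < 1 &
    l * H x + (1 - l) * H y <= H (l * x + (1 - l) * y)].
  apply: contrapT => hn; apply: nsc => x y xy l hl.
  by rewrite ltNge; apply/negP => hle; apply: hn; exists x, y, l.
case: (ltgtP x y) => [xy'|yx|e]; last by rewrite e eqxx in xy.
  by exists x, y, l.
exists y, x, (1 - l); split => //; first lra.
by rewrite opprB addrCA subrr addr0 addrC [in X in _ <= H X]addrC.
Qed.

Lemma not_strictly_convex_touching_line H : continuous H -> ~ strictly_convex H ->
  exists al ga a b, touching_line H a b al ga.
Proof.
move=> cH /not_strictly_convex_witness [a0 [b0 [l [ab /andP[l0 l1] hle]]]].
set m := l * a0 + (1 - l) * b0 in hle.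
have am : a0 < m by rewrite /m; nra.
have mb : m < b0 by rewrite /m; nra.
pose al := (H b0 - H a0) / (b0 - a0); pose ga := H a0 - al * a0.
have ha : H a0 = al * a0 + ga by rewrite /ga; ring.
have hb : H b0 = al * b0 + ga by rewrite /ga /al; field; rewrite subr_eq0 gt_eqF.
have hm : al * m + ga <= H m.
  have -> : al * m + ga = l * (al * a0 + ga) + (1 - l) * (al * b0 + ga).
    by rewrite /m; ring.
  by rewrite -ha -hb.
have [lt_m|eq_m] := ltP (al * m + ga) (H m).
  by exists al, ga; apply: bump_touching_line cH am mb ha hb lt_m.
(* [H] meets the line at [m]: either it stays above it on one side of [m], or
   it dips below on both sides and the secant through the two dips lies
   strictly below [H m]. *)
have {hm eq_m} hm : H m = al * m + ga by apply/eqP; rewrite eq_le hm eq_m.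
have [left|/existsNP [s1 /not_implyP [hs1 /negP]]] :=
  pselect (forall s, a0 <= s <= m -> al * s + ga <= H s).
  by exists al, ga, a0, m; split.
have [right|/existsNP [r1 /not_implyP [hr1 /negP]]] :=
  pselect (forall s, m <= s <= b0 -> al * s + ga <= H s).
  by exists al, ga, m, b0; split.
rewrite -ltNge => gr1; rewrite -ltNge => gs1.
have s1m : s1 < m.
  by case/andP: hs1 => _; rewrite le_eqVlt => /orP[/eqP e|//]; rewrite e hm ltxx in gs1.
have m1r : m < r1.
  by case/andP: hr1; rewrite le_eqVlt => /orP[/eqP e|//]; rewrite -e hm ltxx in gr1.
pose al2 := (H r1 - H s1) / (r1 - s1); pose ga2 := H s1 - al2 * s1.
exists al2, ga2; apply: (bump_touching_line cH s1m m1r).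
- by rewrite /ga2; ring.
- by rewrite /ga2 /al2; field; rewrite subr_eq0 gt_eqF // (lt_trans s1m m1r).
have key : (r1 - s1) * (H m - (al2 * m + ga2)) =
    (r1 - m) * (al * s1 + ga - H s1) + (m - s1) * (al * r1 + ga - H r1).
  by rewrite hm /ga2 /al2; field; rewrite subr_eq0 gt_eqF // (lt_trans s1m m1r).
rewrite -subr_gt0 -(pmulr_rgt0 _ (ltac:(lra) : 0 < r1 - s1)) key.
by apply: addr_gt0; apply: mulr_gt0; rewrite subr_gt0.
Qed.

End TouchingLine.

Section Laplacian.
Variables (R : realType) (n : nat) (E : rel 'I_n) (w : 'I_n -> 'I_n -> R).
Local Notation L := (laplacian E w).
Local Notation nbr i := (fun k => E i k && (k != i)).

Lemma laplacian_mulE (x : 'I_n -> R) i :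
  \sum_j L i j * x j = \sum_(k | nbr i k) w i k * (x i - x k).
Proof.
rewrite (bigD1 i) //= !mxE eqxx.
rewrite [X in _ + X](eq_bigr (fun j => if E i j then - (w i j * x j) else 0)); last first.
  by move=> j ji; rewrite ?mxE eq_sym (negbTE ji); case: (E i j); rewrite ?mulNr ?mul0r.
rewrite -big_mkcondr /= sumrN [X in _ - X](eq_bigl (nbr i)); last by move=> k; rewrite andbC.
by under [RHS]eq_bigr do rewrite mulrBr; rewrite sumrB big_distrl.
Qed.

Lemma laplacian_row_sum0 i : \sum_j L i j = 0.
Proof.
have := laplacian_mulE (fun _ => 1) i; under eq_bigr do rewrite mulr1.
by move=> ->; rewrite big1 // => k _; rewrite subrr mulr0.
Qed.

End Laplacian.

Section LeftPerron.
Variables (R : realType) (n : nat) (L : 'M[R]_n).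

Lemma left_perron_col_sum0 (q : 'I_n -> R) : left_perron L q ->
  forall j, \sum_i q i * L i j = 0.
Proof.
move=> [hq _] j; have := congr1 (fun A : 'rV[R]_n => A 0 j) hq.
by rewrite !mxE => h; rewrite -[RHS]h; apply: eq_bigr => i _; rewrite mxE.
Qed.

Lemma left_perron_mul0 (q z : 'I_n -> R) : left_perron L q ->
  \sum_i q i * \sum_j L i j * z j = 0.
Proof.
move=> hp; under eq_bigr do rewrite big_distrr /=.
rewrite exchange_big big1 //= => j _; under eq_bigr do rewrite mulrA.
by rewrite -big_distrl /= left_perron_col_sum0 // mul0r.
Qed.

Lemma left_perron_ge0 (q : 'I_n -> R) : left_perron L q -> forall i, 0 <= q i.
Proof. by case=> _ [q0 _] i; apply/ltW. Qed.

End LeftPerron.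

Lemma rank_ker_consensus (R : realType) n (L : 'M[R]_n) (x : 'I_n -> R) :
  (0 < n)%N -> \rank L = n.-1 -> (forall i, \sum_j L i j = 0) ->
  (forall i, \sum_j L i j * x j = 0) -> consensus x.
Proof.
move=> n0 rk r0 hx.
have kerP (v : 'I_n -> R) : (forall i, \sum_j L i j * v j = 0) ->
    (\row_i v i <= kermx L^T)%MS.
  move=> hv; apply/sub_kermxP/rowP => i; rewrite !mxE -[RHS](hv i).
  by apply: eq_bigr => j _; rewrite !mxE mulrC.
have ker1 : \rank (kermx L^T) = 1%N.
  by rewrite mxrank_ker mxrank_tr rk; case: (n) n0 => // m _; rewrite subSnn.
have one0 : \row_(i < n) (1 : R) != 0.
  by apply/eqP => /rowP /(_ (Ordinal n0)); rewrite !mxE => /eqP; rewrite oner_eq0.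
have ker_one : (kermx L^T <= \row_(i < n) (1 : R))%MS.
  have k1 : (\row_(i < n) (1 : R) <= kermx L^T)%MS.
    by apply: kerP => i; under eq_bigr do rewrite mulr1.
  by have := (mxrank_leqif_sup k1).2; rewrite rank_rV one0 ker1 => /esym ->.
have [a ha] := sub_rVP (submx_trans (kerP x hx) ker_one).
by exists a => i; have := congr1 (fun A : 'rV[R]_n => A 0 i) ha; rewrite !mxE mulr1.
Qed.

Lemma laplacian_nonconsensus_edge (R : realType) n (E : rel 'I_n)
    (w : 'I_n -> 'I_n -> R) (z : 'I_n -> R) :
  (0 < n)%N -> \rank (laplacian E w) = n.-1 -> ~ consensus z ->
  exists i k, (E i k && (k != i)) /\ z i != z k.
Proof.
move=> n0 rk nc; apply: contrapT => noedge; apply: nc.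
apply: (rank_ker_consensus n0 rk (laplacian_row_sum0 E w)) => i.
rewrite laplacian_mulE big1 // => k hk.
have [->|ne] := eqVneq (z i) (z k); first by rewrite subrr mulr0.
by exfalso; apply: noedge; exists i, k.
Qed.

Section Dissipation.
Variables (R : realType) (n : nat) (E : rel 'I_n) (w : 'I_n -> 'I_n -> R)
  (q : 'I_n -> R) (H : R -> R).
Hypothesis wpos : forall i j, E i j -> 0 < w i j.
Hypothesis hp : left_perron (laplacian E w) q.
Hypothesis Hcv : convex_fun H.
Local Notation nbr i := (fun k => E i k && (k != i)).

Lemma nbr_weight_ge0 i k : nbr i k -> 0 <= w i k.
Proof. by case/andP => /wpos /ltW. Qed.

Definition out_weight i := \sum_(k | nbr i k) w i k.

Lemma out_weight_ge0 i : 0 <= out_weight i.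
Proof. exact/sumr_ge0/nbr_weight_ge0. Qed.

Definition euler_step (z : 'I_n -> R) (h : R) i :=
  z i - h * \sum_(k | nbr i k) w i k * (z i - z k).

Lemma euler_stepE (z : 'I_n -> R) (h : R) i :
  euler_step z h i = z i - h * \sum_j laplacian E w i j * z j.
Proof. by rewrite laplacian_mulE. Qed.

Definition dissipation (z : 'I_n -> R) :=
  \sum_i q i * (2 * \sum_(k | nbr i k) w i k * midpoint_gap H (z i) (z k)).

(* For [h * out_weight i <= 1/2] the Euler step is an average of points at
   most halfway from [z i] to its neighbours, where the midpoint gaps apply. *)
Lemma euler_step_row_le (z : 'I_n -> R) i (h : R) :
  0 <= h -> h * out_weight i <= 2^-1 ->
  H (euler_step z h i) <=
  H (z i) - h * \sum_(k | nbr i k) w i k * (H (z i) - H (z k))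
  - h * (2 * \sum_(k | nbr i k) w i k * midpoint_gap H (z i) (z k)).
Proof.
move=> h0 hs; rewrite /euler_step.
have [s0|sn0] := eqVneq (out_weight i) 0.
  by rewrite !(psumr_eq0_mulr _ (@nbr_weight_ge0 i) s0) !mulr0 !subr0.
have sp : 0 < out_weight i by rewrite lt0r sn0 out_weight_ge0.
set l := h * out_weight i.
have l0 : 0 <= l by rewrite mulr_ge0 ?out_weight_ge0.
pose p k := w i k / out_weight i.
pose m k := (1 - l) * z i + l * z k.
have p0 k : nbr i k -> 0 <= p k by move/nbr_weight_ge0 => ?; rewrite divr_ge0 // ltW.
have p1 : \sum_(k | nbr i k) p k = 1 by rewrite -big_distrl /= divff.
have -> : z i - h * \sum_(k | nbr i k) w i k * (z i - z k)
    = \sum_(k | nbr i k) p k * m k.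
  apply/esym; rewrite (eq_bigr (fun k => p k * z i - h * (w i k * (z i - z k)))); last first.
    by move=> k _; rewrite /p /m /l; field.
  by rewrite sumrB -big_distrl /= p1 mul1r -big_distrr.
apply: le_trans (convex_jensen _ Hcv p0 p1) _.
apply: (@le_trans _ _ (\sum_(k | nbr i k) p k * ((1 - l) * H (z i) + l * H (z k)
    - 2 * l * midpoint_gap H (z i) (z k)))).
  by apply: ler_sum => k hk; rewrite ler_wpM2l ?p0 ?convex_le_sub_gap ?l0.
rewrite (eq_bigr (fun k => p k * H (z i) - h * (w i k * (H (z i) - H (z k)))
    - h * (2 * (w i k * midpoint_gap H (z i) (z k))))); last first.
  by move=> k _; rewrite /p /l; field.
by rewrite !sumrB -big_distrl /= p1 mul1r -!big_distrr.
Qed.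

Lemma euler_step_le (z : 'I_n -> R) (h : R) :
  0 <= h -> (forall i, h * out_weight i <= 2^-1) ->
  \sum_i q i * H (euler_step z h i) <= \sum_i q i * H (z i) - h * dissipation z.
Proof.
move=> h0 hs.
apply: le_trans (ler_sum _ (fun i _ => ler_wpM2l (left_perron_ge0 hp i)
  (euler_step_row_le z h0 (hs i)))) _.
have flux0 : \sum_i q i * \sum_(k | nbr i k) w i k * (H (z i) - H (z k)) = 0.
  rewrite -[RHS](left_perron_mul0 (fun j => H (z j)) hp).
  by apply: eq_bigr => i _; rewrite laplacian_mulE.
under eq_bigr do rewrite !mulrBr mulrCA [q _ * (h * _)]mulrCA.
by rewrite !sumrB -!big_distrr /= flux0 mulr0 subr0.
Qed.

Lemma dissipation_term_ge0 z i :
  0 <= 2 * \sum_(k | nbr i k) w i k * midpoint_gap H (z i) (z k).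
Proof.
rewrite mulr_ge0 //; apply: sumr_ge0 => k hk.
by rewrite mulr_ge0 ?nbr_weight_ge0 ?midpoint_gap_ge0.
Qed.

Lemma dissipation_ge0 z : 0 <= dissipation z.
Proof.
by apply: sumr_ge0 => i _; rewrite mulr_ge0 ?(left_perron_ge0 hp) ?dissipation_term_ge0.
Qed.

Lemma dissipation_gt0 z : strictly_convex H ->
  (exists i k, nbr i k /\ z i != z k) -> 0 < dissipation z.
Proof.
move=> sc [i0 [k0 [hk zk]]].
rewrite /dissipation (bigD1 i0) //=; apply: ltr_pwDl; last first.
  by apply: sumr_ge0 => i _; rewrite mulr_ge0 ?(left_perron_ge0 hp) ?dissipation_term_ge0.
rewrite mulr_gt0 ?mulr_gt0 //; first by case: hp => _ [].
rewrite (bigD1 k0) //=; apply: ltr_pwDl.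
  by case/andP: hk => /wpos w0 _; rewrite mulr_gt0 ?midpoint_gap_gt0.
apply: sumr_ge0 => k /andP[/nbr_weight_ge0 w0 _].
by rewrite mulr_ge0 ?midpoint_gap_ge0.
Qed.

End Dissipation.

Lemma trajectory_nonconsensus_before (R : realType) n (L : 'M[R]_n)
    (x : R -> 'I_n -> R) (t : R) :
  (0 < n)%N -> is_trajectory L x -> ~ consensus (x 0) -> 0 < t ->
  exists tau, 0 < tau < t /\ ~ consensus (x tau).
Proof.
move=> n0 [xc _] nc t0; apply: contrapT => all_cons; apply: nc.
exists (x 0 (Ordinal n0)) => i; apply: within_ge0_eq_at0 (xc i) (xc _) t0 _.
move=> s st; have [a ha] : consensus (x s).
  by apply: contrapT => ncs; apply: all_cons; exists s.
by rewrite !ha.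
Qed.

Section ConvexLyapunov.
Variables (R : realType) (n : nat) (E : rel 'I_n) (w : 'I_n -> 'I_n -> R)
  (q : 'I_n -> R) (H : R -> R) (c : R).
Hypothesis wpos : forall i j, E i j -> 0 < w i j.
Hypothesis hp : left_perron (laplacian E w) q.
Hypothesis c0 : 0 < c.
Hypothesis Hcv : convex_fun H.
Hypothesis Hcont : continuous H.
Local Notation L := (laplacian E w).

Definition lyap_path (x : R -> 'I_n -> R) t := \sum_i q i * H (c * x t i).

Lemma lyap_path_continuous x : is_trajectory L x ->
  {within [set t : R | 0 <= t], continuous (lyap_path x)}.
Proof.
move=> [xc _]; apply/subspace_continuousP => u u0.
apply: (@cvg_big _ _ +%R 0 xpredT add_continuous) => i _; apply: cvgMl_tmp.
have Hc : {for x u i, continuous (fun y => H (c * y))} by exact: continuous_scale.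
exact: continuous_cvg Hc ((subspace_continuousP _ _).1 (xc i) u u0).
Qed.

Lemma trajectory_euler_error x tau e i : is_trajectory L x -> 0 < tau -> 0 < e ->
  \forall h \near 0^'+,
    H (c * x (tau + h) i) - H (euler_step E w (fun j => c * x tau j) h i) <= e * h.
Proof.
move=> [_ dx] tau0 e0; have [dxi dxiE] := dx i tau tau0.
have stepE h : euler_step E w (fun j => c * x tau j) h i
    = c * (x tau i + h * - \sum_j L i j * x tau j).
  rewrite euler_stepE; under eq_bigr do rewrite mulrCA.
  by rewrite -big_distrr /=; ring.
apply: filterS (convex_derive_error (convex_fun_scale c Hcv) (continuous_scale (c := c) Hcont)
  dxi dxiE e0) => h.
by rewrite stepE.
Qed.

Lemma lyap_path_right_decrease x tau e : is_trajectory L x -> 0 < tau -> 0 < e ->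
  \forall h \near 0^'+, lyap_path x (tau + h) <=
    lyap_path x tau - h * dissipation E w q H (fun i => c * x tau i) + e * h.
Proof.
move=> tr tau0 e0.
have err := filter_forall _ (fun i => trajectory_euler_error i tr tau0 e0).
have small : \forall h \near 0^'+, forall i, h * out_weight E w i <= 2^-1.
  apply: filter_forall => i; have half0 : 0 < 2^-1 :> R by rewrite invr_gt0.
  by apply: filterS (near_right_mul_lt _ half0) => h; exact: ltW.
near=> h.
have h0 : 0 < h by near: h; exact: nbhs_right_gt.
have errh : forall i, H (c * x (tau + h) i) -
    H (euler_step E w (fun j => c * x tau j) h i) <= e * h.
  by near: h; exact: err.
have smallh : forall i, h * out_weight E w i <= 2^-1 by near: h; exact: small.
rewrite /lyap_path.
apply: (@le_trans _ _
    (\sum_i q i * (H (euler_step E w (fun j => c * x tau j) h i) + e * h))).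
  apply: ler_sum => i _; apply: ler_wpM2l; first exact: left_perron_ge0 hp i.
  by have := errh i; lra.
under eq_bigr do rewrite mulrDr.
rewrite big_split /= -big_distrl /= (proj2 (proj2 hp)) mul1r lerD2r.
exact: (euler_step_le wpos hp Hcv (fun j => c * x tau j) (ltW h0) smallh).
Unshelve. all: by end_near.
Qed.

Lemma lyap_path_nonincreasing x s u : is_trajectory L x -> 0 <= s <= u ->
  lyap_path x u <= lyap_path x s.
Proof.
move=> tr /andP[s0 su].
have Wc := continuous_within_ge0_dist_lt (lyap_path_continuous tr).
have pos_mono s' : 0 < s' <= u -> lyap_path x u <= lyap_path x s'.
  move=> /andP[s'0 s'u]; apply: nonincreasing_right_dini s'u _ _.
    move=> v /andP[s'v vu] e e0; have [d d0 hd] := Wc v ltac:(lra) e e0.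
    by exists d => // y /andP[s'y _]; apply: hd; lra.
  move=> v /andP[s'v vu] e e0.
  have /near_right_interval [d d0 hd] := lyap_path_right_decrease tr
    (ltac:(lra) : 0 < v) e0.
  exists d => // h hh; have := hd h hh.
  have : 0 <= h * dissipation E w q H (fun i => c * x v i).
    by case/andP: hh => h0 _; rewrite mulr_ge0 ?dissipation_ge0 //; lra.
  lra.
have [s_eq0|s_neq0] := eqVneq s 0; last by apply: pos_mono; rewrite lt0r s_neq0 s0 su.
rewrite s_eq0 in su *; rewrite leNgt; apply/negP => gt0W.
have u0 : 0 < u by rewrite lt0r su andbT; apply/eqP => u_eq0; rewrite u_eq0 ltxx in gt0W.
have [d d0 hd] := Wc 0 (lexx 0) _ (ltac:(lra) : 0 < lyap_path x u - lyap_path x 0).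
pose s' := Num.min (d / 2) u.
have s'0 : 0 < s' by rewrite lt_min; apply/andP; split; lra.
have s'u : s' <= u by rewrite ge_min lexx orbT.
have s'd : s' <= d / 2 by rewrite ge_min lexx.
have := hd s' (ltW s'0) ltac:(rewrite subr0 gtr0_norm //; lra).
rewrite ltr_norml => /andP[_]; have := pos_mono s' ltac:(by rewrite s'0 s'u).
lra.
Qed.

Lemma convex_strict_lyapunov (beta : R) : (0 < n)%N -> \rank L = n.-1 ->
  strictly_convex H -> 0 < beta ->
  strict_lyapunov L (fun v => beta * \sum_(i < n) q i * H (c * v i)).
Proof.
move=> n0 rk sc b0 x tr nc t t0.
suff : lyap_path x t < lyap_path x 0 by rewrite ltr_pM2l.
have [tau [/andP[tau0 taut] nct]] := trajectory_nonconsensus_before n0 tr nc t0.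
have [i [k [ik xik]]] := laplacian_nonconsensus_edge n0 rk nct.
have kap0 : 0 < dissipation E w q H (fun j => c * x tau j).
  apply: dissipation_gt0 => //; exists i, k; split => //.
  by rewrite (inj_eq (mulfI (lt0r_neq0 c0))).
have /near_right_interval [d d0 hd] := lyap_path_right_decrease tr tau0
  (ltac:(lra) : 0 < dissipation E w q H (fun j => c * x tau j) / 2).
pose h := Num.min d (t - tau) / 2.
have m0 : 0 < Num.min d (t - tau) by rewrite lt_min d0 /=; lra.
have m1 : Num.min d (t - tau) <= d by rewrite ge_min lexx.
have m2 : Num.min d (t - tau) <= t - tau by rewrite ge_min lexx orbT.
have h0 : 0 < h by rewrite /h; lra.
have := hd h ltac:(apply/andP; split; rewrite /h; lra).
have := lyap_path_nonincreasing tr (ltac:(apply/andP; split; rewrite /h; lra) :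
  0 <= tau + h <= t).
have := lyap_path_nonincreasing tr (ltac:(apply/andP; split; lra) : 0 <= 0 <= tau).
have : 0 < h * dissipation E w q H (fun j => c * x tau j) by rewrite mulr_gt0.
lra.
Qed.

End ConvexLyapunov.

Section ExpBoundedSeries.
Variable R : realType.

Definition exp_bounded (B D : R) (f : nat -> R) :=
  forall k, `|f k| <= B * (D ^+ k / k`!%:R).

Lemma exp_bounded_ge0 B D f : exp_bounded B D f -> 0 <= B.
Proof. by move/(_ 0%N); rewrite expr0 fact0 divr1 mulr1; apply: le_trans. Qed.

Lemma exp_bounded_exp (a : R) : exp_bounded 1 `|a| (fun k => a ^+ k / k`!%:R).
Proof. by move=> k; rewrite mul1r normrM normrX normfV normr_nat. Qed.

Lemma is_cvg_pseries_exp_bounded B D f : 0 <= D -> exp_bounded B D f ->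
  forall t, cvgn (pseries f t).
Proof.
move=> D0 hb t; have B0 := exp_bounded_ge0 hb.
apply: normed_cvg; apply: (@series_le_cvg R _ (B *: exp_coeff (D * `|t|))).
- by move=> k /=.
- by move=> k; rewrite /exp_coeff /= mulr_ge0 ?divr_ge0 ?exprn_ge0 ?mulr_ge0.
- move=> k /=; rewrite /exp_coeff /= normrM normrX.
  have -> : (B *: (fun n : nat => (D * `|t|) ^+ n / n`!%:R)) k =
      B * (D ^+ k / k`!%:R) * `|t| ^+ k.
    by rewrite -[LHS]/(B * ((D * `|t|) ^+ k / k`!%:R)) exprMn; ring.
  by rewrite ler_wpM2r ?exprn_ge0.
- by apply: is_cvg_seriesZ; exact: is_cvg_series_exp_coeff.
Qed.

Lemma pseries_diffsE (f : nat -> R) k :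
  pseries_diffs f k = k.+1%:R * f k.+1.
Proof. by []. Qed.

Lemma exp_bounded_diffs B D f : 0 <= D -> exp_bounded B D f ->
  exp_bounded (B * D) D (pseries_diffs f).
Proof.
move=> D0 hb k; rewrite pseries_diffsE normrM ger0_norm //.
apply: le_trans (ler_wpM2l (ler0n _ _) (hb k.+1)) _.
have f0 : (k`!%:R : R) != 0 by rewrite pnatr_eq0 -lt0n fact_gt0.
rewrite factS natrM exprS le_eqVlt; apply/orP; left; apply/eqP; field.
by rewrite f0 addrC natr1 pnatr_eq0.
Qed.

Lemma is_derive_pseries_exp_bounded B D f : 0 <= D -> exp_bounded B D f ->
  forall t : R, is_derive t 1 (fun s => limn (pseries f s))
    (limn (pseries (pseries_diffs f) t)).
Proof.
move=> D0 hb t; have h1 := exp_bounded_diffs D0 hb; have h2 := exp_bounded_diffs D0 h1.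
apply: (@pseries_snd_diffs R f (`|t| + 1)).
- exact: is_cvg_pseries_exp_bounded D0 hb _.
- exact: is_cvg_pseries_exp_bounded D0 h1 _.
- exact: is_cvg_pseries_exp_bounded D0 h2 _.
- by have ht := normr_ge0 t; rewrite (ger0_norm (_ : 0 <= `|t| + 1)); lra.
Qed.

Lemma cvg_pseries_sum n (F : 'I_n -> nat -> R) (a : 'I_n -> R) t :
  (forall j, cvgn (pseries (F j) t)) ->
  pseries (fun k => \sum_j a j * F j k) t @ \oo -->
    \sum_j a j * limn (pseries (F j) t).
Proof.
move=> hF.
have -> : pseries (fun k => \sum_j a j * F j k) t =
    (fun N => \sum_j a j * pseries (F j) t N).
  apply/funext => N; rewrite /pseries /series /=.
  under eq_bigr do rewrite big_distrl /=.
  rewrite exchange_big /=; apply: eq_bigr => j _.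
  by rewrite big_distrr /=; apply: eq_bigr => k _; rewrite mulrA.
apply: (@cvg_big _ _ +%R 0 xpredT add_continuous) => j _.
by apply: cvgMl_tmp; exact: hF.
Qed.

Lemma lim_pseries0 (f : nat -> R) : limn (pseries f 0) = f 0%N.
Proof.
apply: lim_near_cst => //; near=> m.
have m0 : (0 < m)%N by near: m; exists 1%N.
rewrite /pseries /series /= -(prednK m0) big_nat_recl // expr0 mulr1 big1 ?addr0 //.
by move=> k _; rewrite expr0n /= mulr0.
Unshelve. all: by end_near.
Qed.

Lemma lim_pseries_exp (a t : R) :
  limn (pseries (fun k => a ^+ k / k`!%:R) t) = expR (a * t).
Proof.
rewrite /expR /pseries; congr (limn _); apply/funext => N; rewrite /series /=.
by apply: eq_bigr => k _; rewrite /exp_coeff /= exprMn; ring.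
Qed.

Lemma lim_pseriesZ (a : R) (f : nat -> R) t : cvgn (pseries f t) ->
  limn (pseries (fun k => a * f k) t) = a * limn (pseries f t).
Proof.
move=> hc; apply: cvg_lim => //.
have -> : pseries (fun k => a * f k) t = (fun N => a * pseries f t N).
  apply/funext => N; rewrite /pseries /series /= big_distrr /=.
  by apply: eq_bigr => k _; rewrite mulrA.
exact: cvgMl_tmp.
Qed.

End ExpBoundedSeries.

Section Uniformization.
Variables (R : realType) (n : nat) (E : rel 'I_n) (w : 'I_n -> 'I_n -> R)
  (q : 'I_n -> R).
Hypothesis wpos : forall i j, E i j -> 0 < w i j.
Hypothesis hp : left_perron (laplacian E w) q.
Local Notation L := (laplacian E w).

Definition unif_rate := 1 + \sum_i out_weight E w i.

Lemma out_weight_lt_unif_rate i : out_weight E w i < unif_rate.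
Proof.
rewrite /unif_rate (bigD1 i) //= addrCA ltrDl; apply: ltr_pwDl => //.
by apply: sumr_ge0 => j _; exact: out_weight_ge0.
Qed.

Lemma unif_rate_gt0 : 0 < unif_rate.
Proof. by apply: ltr_pwDl => //; apply: sumr_ge0 => i _; exact: out_weight_ge0. Qed.

Definition unif_mx i j := (i == j)%:R - L i j / unif_rate.

Lemma unif_mx_ge0 i j : 0 <= unif_mx i j.
Proof.
have d0 := unif_rate_gt0; rewrite /unif_mx; have [<-|ij] := eqVneq i j.
  by rewrite mxE eqxx subr_ge0 ler_pdivrMr // mul1r ltW ?out_weight_lt_unif_rate.
rewrite mxE (negbTE ij) sub0r; case hE: (E i j); last by rewrite mul0r oppr0.
by rewrite mulNr opprK divr_ge0 // ltW // wpos.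
Qed.

Lemma sum_delta_l (F : 'I_n -> R) i : \sum_j (i == j)%:R * F j = F i.
Proof.
rewrite (bigD1 i) //= eqxx mul1r big1 ?addr0 // => j ji.
by rewrite eq_sym (negbTE ji) mul0r.
Qed.

Lemma sum_delta_r (F : 'I_n -> R) j : \sum_i F i * (i == j)%:R = F j.
Proof.
rewrite (bigD1 j) //= eqxx mulr1 big1 ?addr0 // => i ij.
by rewrite (negbTE ij) mulr0.
Qed.

Lemma laplacian_mul_unifE (z : 'I_n -> R) i :
  \sum_j L i j * z j = unif_rate * (z i - \sum_j unif_mx i j * z j).
Proof.
have d0 := unif_rate_gt0.
rewrite -[X in _ * (X - _)](sum_delta_l z i) -sumrB mulr_sumr.
by apply: eq_bigr => j _; rewrite /unif_mx; field; exact: lt0r_neq0.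
Qed.

Lemma unif_mx_row_sum1 i : \sum_j unif_mx i j = 1.
Proof.
rewrite /unif_mx sumrB -big_distrl /= laplacian_row_sum0 mul0r subr0.
by rewrite -[RHS](sum_delta_l (fun _ => 1) i); under [RHS]eq_bigr do rewrite mulr1.
Qed.

Lemma left_perron_unif_mx j : \sum_i q i * unif_mx i j = q j.
Proof.
under eq_bigr do rewrite /unif_mx mulrBr mulrA.
by rewrite sumrB sum_delta_r -big_distrl /= left_perron_col_sum0 // mul0r subr0.
Qed.

Fixpoint unif_iter (x0 : 'I_n -> R) k : 'I_n -> R :=
  if k is k'.+1 then fun i => \sum_j unif_mx i j * unif_iter x0 k' j else x0.

Lemma unif_iter_bounds x0 (m M : R) : (forall j, m <= x0 j <= M) ->
  forall k i, m <= unif_iter x0 k i <= M.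
Proof.
move=> hx; elim=> [|k IH] i //=.
have avg (b : R) : \sum_j unif_mx i j * b = b by rewrite -big_distrl /= unif_mx_row_sum1 mul1r.
apply/andP; split.
  rewrite -[X in X <= _]avg; apply: ler_sum => j _.
  by apply: ler_wpM2l; [exact: unif_mx_ge0 | case/andP: (IH j)].
rewrite -[X in _ <= X]avg; apply: ler_sum => j _.
by apply: ler_wpM2l; [exact: unif_mx_ge0 | case/andP: (IH j)].
Qed.

Lemma left_perron_unif_iter x0 k :
  \sum_i q i * unif_iter x0 k i = \sum_i q i * x0 i.
Proof.
elim: k => [|k IH] //=; rewrite -IH.
under eq_bigr do rewrite big_distrr /=.
rewrite exchange_big /=; apply: eq_bigr => j _.
by under eq_bigr do rewrite mulrA; rewrite -big_distrl /= left_perron_unif_mx.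
Qed.

End Uniformization.

Section UniformizedTrajectory.
Variables (R : realType) (n : nat) (E : rel 'I_n) (w : 'I_n -> 'I_n -> R)
  (q : 'I_n -> R).
Hypothesis wpos : forall i j, E i j -> 0 < w i j.
Hypothesis hp : left_perron (laplacian E w) q.
Local Notation L := (laplacian E w).
Local Notation d := (unif_rate E w).
Local Notation P := (unif_mx E w).

Lemma unif_rate_ge0 : 0 <= d. Proof. exact/ltW/unif_rate_gt0. Qed.

Definition unif_coef (x0 : 'I_n -> R) i k := d ^+ k / k`!%:R * unif_iter E w x0 k i.

Lemma unif_coef_exp_bounded x0 i :
  exp_bounded (\sum_j `|x0 j|) d (unif_coef x0 i).
Proof.
set S := \sum_j `|x0 j|.
have xS j : - S <= x0 j <= S.
  have : `|x0 j| <= S by rewrite /S (bigD1 j) //= lerDl sumr_ge0.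
  by rewrite ler_norml.
move=> k; have /andP[lo hi] := unif_iter_bounds wpos xS k i.
rewrite /unif_coef normrM ger0_norm ?divr_ge0 ?exprn_ge0 ?unif_rate_ge0 //.
by rewrite mulrC ler_wpM2r ?divr_ge0 ?exprn_ge0 ?unif_rate_ge0 // ler_norml lo hi.
Qed.

Lemma unif_coef_diffs x0 i :
  pseries_diffs (unif_coef x0 i) = fun k => \sum_j (d * P i j) * unif_coef x0 j k.
Proof.
apply/funext => k; rewrite pseries_diffsE /unif_coef /=.
rewrite [RHS](_ : _ = d * (d ^+ k / k`!%:R) * \sum_j P i j * unif_iter E w x0 k j).
  have f0 : (k`!%:R : R) != 0 by rewrite pnatr_eq0 -lt0n fact_gt0.
  rewrite factS natrM exprS; field.
  by rewrite f0 addrC natr1 pnatr_eq0.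
by rewrite big_distrr /=; apply: eq_bigr => j _; ring.
Qed.

Definition unif_series x0 i t := limn (pseries (unif_coef x0 i) t).

(* [exp (- L t) = exp (- d t) * exp (d t P)] for the stochastic matrix [P = I - L / d]. *)
Definition unif_traj x0 t i := expR (- d * t) * unif_series x0 i t.

Lemma is_cvg_unif_series x0 i t : cvgn (pseries (unif_coef x0 i) t).
Proof. exact: is_cvg_pseries_exp_bounded unif_rate_ge0 (unif_coef_exp_bounded x0 i) t. Qed.

Lemma is_derive_unif_series x0 i (t : R) :
  is_derive t 1 (unif_series x0 i) (\sum_j (d * P i j) * unif_series x0 j t).
Proof.
apply: is_derive_eq (is_derive_pseries_exp_bounded unif_rate_ge0
  (unif_coef_exp_bounded x0 i) t) _.
rewrite unif_coef_diffs; apply: cvg_lim => //.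
by apply: cvg_pseries_sum => j; exact: is_cvg_unif_series.
Qed.

Lemma is_derive_unif_traj x0 i (t : R) :
  is_derive t 1 (fun s => unif_traj x0 s i) (- \sum_j L i j * unif_traj x0 t j).
Proof.
have dexp : is_derive t 1 (fun s => expR (- d * s)) (- d * expR (- d * t)).
  apply: is_derive_eq (is_derive1_comp (f := expR) (g := fun s => - d * s) _ _) _.
  by rewrite mulrC /GRing.scale /= mulr1.
apply: is_derive_eq (is_deriveM dexp (is_derive_unif_series x0 i t)) _.
rewrite (laplacian_mul_unifE wpos) /unif_traj.
under [X in _ - X]eq_bigr do rewrite mulrCA.
rewrite -big_distrr /=.
under eq_bigr do rewrite -mulrA.
by rewrite -big_distrr /= /GRing.scale /=; ring.
Qed.

Lemma unif_traj_is_trajectory x0 : is_trajectory L (unif_traj x0).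
Proof.
split=> [i|i t _]; last first.
  by have [? ?] := is_derive_unif_traj x0 i t; rewrite derive1E.
apply: continuous_subspaceT => t; apply: differentiable_continuous.
by apply/derivable1_diffP; case: (is_derive_unif_traj x0 i t).
Qed.

Lemma unif_traj0 x0 i : unif_traj x0 0 i = x0 i.
Proof.
rewrite /unif_traj /unif_series lim_pseries0 /unif_coef.
by rewrite mulr0 expR0 expr0 fact0 divr1 !mul1r.
Qed.

Lemma unif_series_bounds x0 (m M : R) i t : (forall j, m <= x0 j <= M) -> 0 <= t ->
  m * expR (d * t) <= unif_series x0 i t <= M * expR (d * t).
Proof.
move=> hx t0.
have coefE k : unif_coef x0 i k * t ^+ k = unif_iter E w x0 k i * exp_coeff (d * t) k.
  by rewrite /unif_coef /exp_coeff /= exprMn; ring.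
have e0 k : 0 <= exp_coeff (d * t) k.
  by rewrite /exp_coeff /= divr_ge0 ?exprn_ge0 ?mulr_ge0 ?unif_rate_ge0.
have limE (a : R) : limn (series (a *: exp_coeff (d * t))) = a * expR (d * t).
  by rewrite lim_seriesZ //; exact: is_cvg_series_exp_coeff.
have cvgZ (a : R) : cvgn (series (a *: exp_coeff (d * t))).
  by apply: is_cvg_seriesZ; exact: is_cvg_series_exp_coeff.
have bnd k := unif_iter_bounds wpos hx k i.
apply/andP; split; rewrite -limE /unif_series /pseries.
  apply: lim_series_le => // [|k]; first exact: is_cvg_unif_series.
  rewrite [X in _ <= X]/= coefE ler_wpM2r //; by case/andP: (bnd k).
apply: lim_series_le => // [|k]; first exact: is_cvg_unif_series.
rewrite [X in X <= _]/= coefE ler_wpM2r //; by case/andP: (bnd k).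
Qed.

Lemma unif_traj_bounds x0 (m M : R) i t : (forall j, m <= x0 j <= M) -> 0 <= t ->
  m <= unif_traj x0 t i <= M.
Proof.
move=> hx t0; have /andP[lo hi] := unif_series_bounds i hx t0.
have g0 : 0 < expR (- d * t) by exact: expR_gt0.
have gE : expR (- d * t) * expR (d * t) = 1.
  by rewrite mulNr expRN mulVf // gt_eqF // expR_gt0.
rewrite /unif_traj -[X in X <= _ <= _]mul1r -[X in _ <= _ <= X]mul1r -gE -!mulrA.
by rewrite !ler_pM2l // [_ * m]mulrC [_ * M]mulrC lo hi.
Qed.

Lemma left_perron_unif_traj x0 t :
  \sum_i q i * unif_traj x0 t i = \sum_i q i * x0 i.
Proof.
set Q := \sum_i q i * x0 i.
have -> : \sum_i q i * unif_traj x0 t i =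
    expR (- d * t) * \sum_i q i * unif_series x0 i t.
  by rewrite big_distrr /=; apply: eq_bigr => i _; rewrite /unif_traj; ring.
have -> : \sum_i q i * unif_series x0 i t =
    limn (pseries (fun k => \sum_i q i * unif_coef x0 i k) t).
  by apply/esym/cvg_lim => //; apply: cvg_pseries_sum => j; exact: is_cvg_unif_series.
have -> : (fun k => \sum_i q i * unif_coef x0 i k) = (fun k => Q * (d ^+ k / k`!%:R)).
  apply/funext => k; rewrite /unif_coef /Q -(left_perron_unif_iter hp x0 k) big_distrl /=.
  by apply: eq_bigr => i _; ring.
rewrite lim_pseriesZ; last first.
  exact: is_cvg_pseries_exp_bounded (normr_ge0 d) (exp_bounded_exp d) t.
by rewrite lim_pseries_exp mulrCA mulNr expRN mulVf ?mulr1 // gt_eqF // expR_gt0.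
Qed.

End UniformizedTrajectory.

Section NotStrictlyConvex.
Variables (R : realType) (n : nat) (E : rel 'I_n) (w : 'I_n -> 'I_n -> R)
  (q : 'I_n -> R) (H : R -> R) (c : R).
Hypothesis wpos : forall i j, E i j -> 0 < w i j.
Hypothesis hp : left_perron (laplacian E w) q.
Hypothesis c0 : 0 < c.

Lemma left_perron_affine_mean (al ga : R) (z : 'I_n -> R) :
  \sum_i q i * (al * z i + ga) = al * \sum_i q i * z i + ga.
Proof.
under eq_bigr do rewrite mulrDr mulrCA.
by rewrite big_split /= -!big_distrr -big_distrl /= (proj2 (proj2 hp)) mul1r.
Qed.

(* Started at the contact points, the uniformized trajectory stays between
   them, where [H] lies above the line, while the [q]-mean is conserved. *)
Lemma touching_line_lyap_ge (a b al ga : R) (x0 : 'I_n -> R) t :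
  touching_line H a b al ga -> (forall j, x0 j = a / c \/ x0 j = b / c) -> 0 <= t ->
  \sum_i q i * H (c * x0 i) <= \sum_i q i * H (c * unif_traj E w x0 t i).
Proof.
move=> [ab Ha Hb above] hx0 t0.
have cK (s : R) : c * (s / c) = s by rewrite mulrC divfK // gt_eqF.
have onx0 i : H (c * x0 i) = al * (c * x0 i) + ga.
  by case: (hx0 i) => ->; rewrite cK.
have xb j : a / c <= x0 j <= b / c.
  by case: (hx0 j) => ->; rewrite lexx ler_pM2r ?invr_gt0 // ltW.
have mean_eq : \sum_i q i * (al * (c * x0 i) + ga)
    = \sum_i q i * (al * (c * unif_traj E w x0 t i) + ga).
  rewrite !left_perron_affine_mean; congr (al * _ + ga).
  under eq_bigr do rewrite mulrCA; under [RHS]eq_bigr do rewrite mulrCA.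
  by rewrite -!big_distrr /= left_perron_unif_traj.
under eq_bigr do rewrite onx0; rewrite mean_eq.
apply: ler_sum => i _; rewrite ler_wpM2l ?(left_perron_ge0 hp) //.
have /andP[lo hi] := unif_traj_bounds wpos i xb t0.
by apply: above; rewrite -(cK a) -(cK b) !(ler_pM2l c0) lo hi.
Qed.

Lemma strict_lyapunov_strictly_convex (beta : R) : (2 <= n)%N -> 0 < beta ->
  continuous H ->
  strict_lyapunov (laplacian E w) (fun v => beta * \sum_(i < n) q i * H (c * v i)) ->
  strictly_convex H.
Proof.
move=> n2 b0 Hcont lyap; apply: contrapT => nsc.
have [al [ga [a [b touch]]]] := not_strictly_convex_touching_line Hcont nsc.
have [ab _ _ _] := touch.
pose i0 : 'I_n := Ordinal (leq_trans (isT : (0 < 2)%N) n2).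
pose i1 : 'I_n := Ordinal (leq_trans (isT : (1 < 2)%N) n2).
pose x0 i := if i == i0 then a / c else b / c.
have hx0 j : x0 j = a / c \/ x0 j = b / c by rewrite /x0; case: ifP; [left | right].
have nc : ~ consensus (unif_traj E w x0 0).
  move=> [v hv]; have := hv i0; have := hv i1.
  rewrite !unif_traj0 /x0 eqxx (_ : (i1 == i0) = false) // => <- /eqP.
  have : a / c < b / c by rewrite ltr_pM2r ?invr_gt0.
  by rewrite lt_neqAle => /andP[/negPf ->].
have := lyap (unif_traj E w x0) (unif_traj_is_trajectory wpos x0) nc 1 ltr01.
rewrite ltr_pM2l //; under [X in _ < X]eq_bigr do rewrite unif_traj0.
by rewrite ltNge (touching_line_lyap_ge touch hx0 ler01).
Qed.

End NotStrictlyConvex.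

Unset Implicit Arguments.
Theorem theorem1 (R : realType) (n : nat) (E : rel 'I_n)
  (w : 'I_n -> 'I_n -> R) (q : 'I_n -> R) (H : R -> R) (beta c : R) :
  (2 <= n)%N ->
  (forall i j, E i j -> 0 < w i j) ->
  \rank (laplacian E w) = n.-1 ->
  left_perron (laplacian E w) q ->
  continuous H ->
  0 < beta -> 0 < c ->
  strict_lyapunov (laplacian E w)
    (fun v => beta * \sum_(i < n) q i * H (c * v i))
  <-> strictly_convex H.
Proof.
move=> n2 wpos rk hp Hcont b0 c0; split.
  exact: strict_lyapunov_strictly_convex.
move=> sc; apply: convex_strict_lyapunov => //.
- exact: strictly_convex_convex.
- exact: leq_trans n2.
Qed.
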